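(* Let $L$ be a $\kappa$-frame. Every quotient $L/C$ ($C\in\mathbb{C}L$) of $L$ is d-reduced if and only if $L$ is Boolean (every element of $L$ has a complement).
   Context: $\kappa$ is a fixed regular cardinal; a $\kappa$-frame is a bounded distributive lattice having joins of all subsets of cardinality $<\kappa$ and satisfying the frame distributive law for such joins. A congruence is an equivalence relation that is a sub-$\kappa$-frame of $L\times L$; $\mathbb{C}L$ is the set of congruences and $L/C$ the quotient $\kappa$-frame. A $\kappa$-frame $M$ is d-reduced if $\mathfrak{D}_M=\{(a,b)\mid\forall x\in M:\ a\wedge x=0\iff b\wedge x=0\}$ is the diagonal. *)

From Stdlib Require Import ClassicalEpsilon.

(* Cardinals are represented by types: |A| <= |B| iff A injects into B. *)
Definition inj_into (A B : Type) : Prop :=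
  exists f : A -> B, forall x y, f x = f y -> x = y.

Definition card_lt (A K : Type) : Prop := inj_into A K /\ ~ inj_into K A.

(* K represents a regular cardinal kappa: kappa is infinite, and a union of
   fewer than kappa sets, each of cardinality < kappa, has cardinality < kappa. *)
Definition regular_cardinal (K : Type) : Prop :=
  inj_into nat K /\
  forall (I : Type) (A : I -> Type),
    card_lt I K -> (forall i, card_lt (A i) K) -> card_lt {i : I & A i} K.

Definition is_lub {L : Type} (le : L -> L -> Prop) {I : Type} (f : I -> L) (s : L) : Prop :=
  (forall i, le (f i) s) /\ (forall u, (forall i, le (f i) u) -> le s u).

(* A kappa-frame: a bounded lattice having joins of all families indexed by
   sets of cardinality < kappa, satisfying the frame distributive law
   a /\ (\/ f) = \/ (a /\ f i) for such joins. (Lattice distributivity is the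
   binary instance of this law.) *)
Record kframe (K : Type) := KFrame {
  kcar :> Type;
  kle : kcar -> kcar -> Prop;
  kbot : kcar;
  ktop : kcar;
  kmeet : kcar -> kcar -> kcar;
  kjoin : kcar -> kcar -> kcar;
  kle_refl : forall x, kle x x;
  kle_trans : forall x y z, kle x y -> kle y z -> kle x z;
  kle_antisym : forall x y, kle x y -> kle y x -> x = y;
  kbot_le : forall x, kle kbot x;
  kle_top : forall x, kle x ktop;
  kmeet_glb : forall a b c, kle c (kmeet a b) <-> (kle c a /\ kle c b);
  kjoin_lub : forall a b c, kle (kjoin a b) c <-> (kle a c /\ kle b c);
  ksup_ex : forall (I : Type) (f : I -> kcar), card_lt I K -> exists s, is_lub kle f s;
  kdistr : forall (I : Type) (f : I -> kcar) (s a : kcar), card_lt I K ->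
    is_lub kle f s -> is_lub kle (fun i => kmeet a (f i)) (kmeet a s)
}.

Arguments kle {K L} : rename.
Arguments kbot {K L} : rename.
Arguments ktop {K L} : rename.
Arguments kmeet {K L} : rename.
Arguments kjoin {K L} : rename.

(* Congruence: an equivalence relation on L that is a sub-kappa-frame of L x L
   (operations of L x L are componentwise; (0,0),(1,1) belong to C by
   reflexivity). *)
Definition congruence {K} (L : kframe K) (C : L -> L -> Prop) : Prop :=
  (forall a, C a a) /\
  (forall a b, C a b -> C b a) /\
  (forall a b c, C a b -> C b c -> C a c) /\
  (forall a b a' b', C a a' -> C b b' -> C (kmeet a b) (kmeet a' b')) /\
  (forall a b a' b', C a a' -> C b b' -> C (kjoin a b) (kjoin a' b')) /\
  (forall (I : Type) (f g : I -> L) (s t : L), card_lt I K ->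
     (forall i, C (f i) (g i)) -> is_lub kle f s -> is_lub kle g t -> C s t).

Definition dRel {M : Type} (meet : M -> M -> M) (bot : M) (a b : M) : Prop :=
  forall x, meet a x = bot <-> meet b x = bot.

Definition d_reduced {M : Type} (meet : M -> M -> M) (bot : M) : Prop :=
  forall a b, dRel meet bot a b <-> a = b.

Definition boolean {K} (L : kframe K) : Prop :=
  forall a : L, exists b : L, kmeet a b = kbot /\ kjoin a b = ktop.

Section Quotient.
Context {K : Type} (L : kframe K) (C : L -> L -> Prop).

Definition quot : Type := { P : L -> Prop | exists a, P = C a }.

Definition cls (a : L) : quot := exist _ (C a) (ex_intro _ a eq_refl).

Definition rep (p : quot) : L :=
  proj1_sig (constructive_indefinite_description _ (proj2_sig p)).

Definition qmeet (p q : quot) : quot := cls (kmeet (rep p) (rep q)).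
Definition qjoin (p q : quot) : quot := cls (kjoin (rep p) (rep q)).
Definition qbot : quot := cls kbot.
Definition qtop : quot := cls ktop.
End Quotient.

From Stdlib Require Import ClassicalEpsilon FunctionalExtensionality PropExtensionality ProofIrrelevance.

(* If every quotient is d-reduced, fix [a] and collapse everything "disjoint
   from [a]": [x ~ y] iff [x <= y \/ z] and [y <= x \/ z] for some [z] with
   [a /\ z = 0].  This is a congruence, and in its quotient [a] and [1] have
   the same annihilator, so they are identified; unfolding [a ~ 1] produces a
   complement of [a].  Conversely, in a Boolean frame, if [[a]] and [[b]] have
   the same annihilator in [L/C], then [a /\ b'] is [C]-null for the complement
   [b'] of [b], so [a = (a /\ b) \/ (a /\ b')] is [C]-equivalent to [a /\ b];
   by symmetry [a ~ a /\ b ~ b]. *)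

Lemma inj_into_trans (A B D : Type) : inj_into A B -> inj_into B D -> inj_into A D.
Proof.
  intros [f Hf] [g Hg]. exists (fun x => g (f x)). intros x y E. apply Hf, Hg, E.
Qed.

Lemma not_inj_into_nat_bool : ~ inj_into nat bool.
Proof.
  intros [g Hg].
  assert (H01 : g 0 <> g 1) by (intro E; discriminate (Hg _ _ E)).
  assert (H02 : g 0 <> g 2) by (intro E; discriminate (Hg _ _ E)).
  assert (H12 : g 1 <> g 2) by (intro E; discriminate (Hg _ _ E)).
  destruct (g 0), (g 1), (g 2); congruence.
Qed.

Lemma card_lt_bool (K : Type) : inj_into nat K -> card_lt bool K.
Proof.
  intros [f Hf]. split.
  - exists (fun b : bool => if b then f 0 else f 1).
    intros [|] [|] E; auto; discriminate (Hf _ _ E).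
  - intro HKb. apply not_inj_into_nat_bool, (inj_into_trans _ K); [exists f|]; assumption.
Qed.

Section Lattice.
Context {K : Type} (L : kframe K).

Lemma kle_meet_l (x y z : L) : kle x z -> kle (kmeet x y) z.
Proof.
  intro H. apply (kle_trans _ L _ x); [|exact H].
  exact (proj1 (proj1 (kmeet_glb _ L x y _) (kle_refl _ L _))).
Qed.

Lemma kle_meet_r (x y z : L) : kle y z -> kle (kmeet x y) z.
Proof.
  intro H. apply (kle_trans _ L _ y); [|exact H].
  exact (proj2 (proj1 (kmeet_glb _ L x y _) (kle_refl _ L _))).
Qed.

Lemma kmeet_greatest (x y z : L) : kle z x -> kle z y -> kle z (kmeet x y).
Proof. intros; apply kmeet_glb; auto. Qed.

Lemma kle_join_l (x y z : L) : kle x y -> kle x (kjoin y z).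
Proof.
  intro H. apply (kle_trans _ L _ y); [exact H|].
  exact (proj1 (proj1 (kjoin_lub _ L y z _) (kle_refl _ L _))).
Qed.

Lemma kle_join_r (x y z : L) : kle x z -> kle x (kjoin y z).
Proof.
  intro H. apply (kle_trans _ L _ z); [exact H|].
  exact (proj2 (proj1 (kjoin_lub _ L y z _) (kle_refl _ L _))).
Qed.

Lemma kjoin_least (x y z : L) : kle x z -> kle y z -> kle (kjoin x y) z.
Proof. intros; apply kjoin_lub; auto. Qed.

Hint Resolve kle_refl kbot_le kle_top kle_meet_l kle_meet_r kmeet_greatest
  kle_join_l kle_join_r kjoin_least : lat.

Lemma kle_bot_eq (x : L) : kle x kbot -> x = kbot.
Proof. intro H. apply kle_antisym; auto with lat. Qed.

Section Distributivity.
Hypothesis Hbool : card_lt bool K.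

Lemma kmeet_join_distr (a b c : L) :
  kle (kmeet a (kjoin b c)) (kjoin (kmeet a b) (kmeet a c)).
Proof.
  set (f := fun x : bool => if x then b else c).
  assert (Hf : is_lub kle f (kjoin b c)).
  { split.
    - intros [|]; simpl; auto with lat.
    - intros u Hu. apply kjoin_least; [apply (Hu true)|apply (Hu false)]. }
  apply (proj2 (kdistr _ L bool f _ a Hbool Hf)).
  intros [|]; simpl; auto with lat.
Qed.

Lemma kjoin_meet_distr (p q w : L) :
  kle (kmeet (kjoin p w) (kjoin q w)) (kjoin (kmeet p q) w).
Proof.
  apply (kle_trans _ L _ _ _ (kmeet_join_distr _ _ _)).
  apply kjoin_least; [|auto with lat].
  apply (kle_trans _ L _ (kmeet q (kjoin p w))); [auto with lat|].
  apply (kle_trans _ L _ _ _ (kmeet_join_distr _ _ _)).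
  auto with lat.
Qed.

Lemma kmeet_join_eq_bot (a z1 z2 : L) :
  kmeet a z1 = kbot -> kmeet a z2 = kbot -> kmeet a (kjoin z1 z2) = kbot.
Proof.
  intros H1 H2. apply kle_bot_eq.
  apply (kle_trans _ L _ _ _ (kmeet_join_distr _ _ _)).
  rewrite H1, H2. auto with lat.
Qed.

Lemma complement_split (a b b' : L) :
  kjoin b b' = ktop -> a = kjoin (kmeet a b) (kmeet a b').
Proof.
  intro Hb. apply kle_antisym; [|auto with lat].
  apply (kle_trans _ L _ (kmeet a (kjoin b b'))); [rewrite Hb; auto with lat|].
  apply kmeet_join_distr.
Qed.

End Distributivity.
End Lattice.

Hint Resolve kle_refl kbot_le kle_top kle_meet_l kle_meet_r kmeet_greatest
  kle_join_l kle_join_r kjoin_least : lat.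

Section AnnihilatorCongruence.
Context {K : Type} (L : kframe K) (Hbool : card_lt bool K) (a : L).

Definition ann_cong (x y : L) : Prop :=
  exists z, kmeet a z = kbot /\ kle x (kjoin y z) /\ kle y (kjoin x z).

Lemma ann_cong_congruence : congruence L ann_cong.
Proof.
  unfold ann_cong; split; [|split; [|split; [|split; [|split]]]].
  - intro x. exists kbot. split; [apply kle_bot_eq; auto with lat|auto with lat].
  - intros x y (z & Hz & H1 & H2). eauto.
  - intros x y w (z1 & Hz1 & A1 & A2) (z2 & Hz2 & B1 & B2).
    exists (kjoin z1 z2). split; [apply kmeet_join_eq_bot; assumption|split].
    + apply (kle_trans _ L _ _ _ A1). apply kjoin_least; [|auto with lat].
      apply (kle_trans _ L _ _ _ B1). auto with lat.
    + apply (kle_trans _ L _ _ _ B2). apply kjoin_least; [|auto with lat].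
      apply (kle_trans _ L _ _ _ A2). auto with lat.
  - intros x y x' y' (z1 & Hz1 & A1 & A2) (z2 & Hz2 & B1 & B2).
    exists (kjoin z1 z2). split; [apply kmeet_join_eq_bot; assumption|split].
    + apply (kle_trans _ L _ (kmeet (kjoin x' (kjoin z1 z2)) (kjoin y' (kjoin z1 z2))));
        [|apply kjoin_meet_distr, Hbool].
      apply kmeet_greatest; [apply kle_meet_l, (kle_trans _ L _ _ _ A1)
                            |apply kle_meet_r, (kle_trans _ L _ _ _ B1)]; auto with lat.
    + apply (kle_trans _ L _ (kmeet (kjoin x (kjoin z1 z2)) (kjoin y (kjoin z1 z2))));
        [|apply kjoin_meet_distr, Hbool].
      apply kmeet_greatest; [apply kle_meet_l, (kle_trans _ L _ _ _ A2)
                            |apply kle_meet_r, (kle_trans _ L _ _ _ B2)]; auto with lat.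
  - intros x y x' y' (z1 & Hz1 & A1 & A2) (z2 & Hz2 & B1 & B2).
    exists (kjoin z1 z2). split; [apply kmeet_join_eq_bot; assumption|split].
    + apply kjoin_least; [apply (kle_trans _ L _ _ _ A1)|apply (kle_trans _ L _ _ _ B1)];
        auto with lat.
    + apply kjoin_least; [apply (kle_trans _ L _ _ _ A2)|apply (kle_trans _ L _ _ _ B2)];
        auto with lat.
  - intros I f g s t HI Hfg Hs Ht.
    destruct (choice _ Hfg) as [z Hz].
    destruct (ksup_ex _ L I z HI) as [Z HZ].
    exists Z. split; [|split].
    + apply kle_bot_eq. apply (proj2 (kdistr _ L I z Z a HI HZ)).
      intro i. rewrite (proj1 (Hz i)). auto with lat.
    + apply (proj2 Hs). intro i. apply (kle_trans _ L _ _ _ (proj1 (proj2 (Hz i)))).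
      apply kjoin_least; [apply kle_join_l, (proj1 Ht)|apply kle_join_r, (proj1 HZ)].
    + apply (proj2 Ht). intro i. apply (kle_trans _ L _ _ _ (proj2 (proj2 (Hz i)))).
      apply kjoin_least; [apply kle_join_l, (proj1 Hs)|apply kle_join_r, (proj1 HZ)].
Qed.

Lemma ann_cong_bot (w : L) : ann_cong w kbot <-> kmeet a w = kbot.
Proof.
  split.
  - intros (z & Hz & H1 & _). apply kle_bot_eq. rewrite <- Hz.
    apply kmeet_greatest; [auto with lat|].
    apply kle_meet_r, (kle_trans _ L _ _ _ H1). auto with lat.
  - intro Hw. exists w. auto with lat.
Qed.

Lemma ann_cong_top_complement : ann_cong a ktop -> exists b, kmeet a b = kbot /\ kjoin a b = ktop.
Proof.
  intros (z & Hz & _ & Htop). exists z. split; [exact Hz|].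
  apply kle_antisym; auto with lat.
Qed.

End AnnihilatorCongruence.

Section Quotient.
Context {K : Type} (L : kframe K) (C : L -> L -> Prop) (HC : congruence L C).

Lemma quot_ext (p q : quot L C) : proj1_sig p = proj1_sig q -> p = q.
Proof.
  destruct p as [P HP], q as [Q HQ]; simpl; intros ->. f_equal; apply proof_irrelevance.
Qed.

Lemma cls_eq (a b : L) : cls L C a = cls L C b <-> C a b.
Proof.
  destruct HC as (Crefl & Csym & Ctrans & _).
  split.
  - intro E. apply (f_equal (@proj1_sig _ _)) in E. simpl in E. rewrite E. apply Crefl.
  - intro H. apply quot_ext; simpl. extensionality x. apply propositional_extensionality.
    split; eauto.
Qed.

Lemma cls_rep (p : quot L C) : p = cls L C (rep L C p).
Proof.
  apply quot_ext. simpl. unfold rep.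
  destruct (constructive_indefinite_description _ _) as [r Hr]; exact Hr.
Qed.

Lemma qmeet_cls (a b : L) : qmeet L C (cls L C a) (cls L C b) = cls L C (kmeet a b).
Proof.
  unfold qmeet. apply cls_eq. destruct HC as (_ & _ & _ & Cmeet & _).
  apply Cmeet; apply cls_eq; rewrite <- cls_rep; reflexivity.
Qed.

Lemma dRel_cls (a b : L) :
  dRel (qmeet L C) (qbot L C) (cls L C a) (cls L C b) <->
  (forall x, C (kmeet a x) kbot <-> C (kmeet b x) kbot).
Proof.
  unfold dRel, qbot. split.
  - intros H x. rewrite <- !cls_eq, <- !qmeet_cls. apply H.
  - intros H p. rewrite (cls_rep p), !qmeet_cls, !cls_eq. apply H.
Qed.

Lemma d_reduced_quot_iff :
  d_reduced (qmeet L C) (qbot L C) <->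
  (forall a b, (forall x, C (kmeet a x) kbot <-> C (kmeet b x) kbot) -> C a b).
Proof.
  split.
  - intros H a b Hab. apply cls_eq, H, dRel_cls, Hab.
  - intros H p q. rewrite (cls_rep p), (cls_rep q), dRel_cls, cls_eq.
    split; [apply H|]. intros Hpq x. rewrite <- !cls_eq, <- !qmeet_cls, (proj2 (cls_eq _ _) Hpq). tauto.
Qed.

End Quotient.

Lemma d_reduced_quot_boolean {K} (L : kframe K) (Hbool : card_lt bool K) :
  (forall C : L -> L -> Prop, congruence L C -> d_reduced (qmeet L C) (qbot L C)) ->
  boolean L.
Proof.
  intros H a.
  pose proof (ann_cong_congruence L Hbool a) as HC.
  apply ann_cong_top_complement.
  apply (proj1 (d_reduced_quot_iff L _ HC) (H _ HC)). intro x.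
  rewrite !ann_cong_bot.
  replace (kmeet a (kmeet a x)) with (kmeet a x) by (apply kle_antisym; auto with lat).
  replace (kmeet a (kmeet ktop x)) with (kmeet a x) by (apply kle_antisym; auto with lat).
  tauto.
Qed.

Lemma boolean_quot_d_reduced {K} (L : kframe K) (Hbool : card_lt bool K) (C : L -> L -> Prop) :
  boolean L -> congruence L C -> d_reduced (qmeet L C) (qbot L C).
Proof.
  intros HB HC. pose proof HC as (Crefl & Csym & Ctrans & _ & Cjoin & _).
  assert (Hmeet : forall a b, (forall x, C (kmeet a x) kbot <-> C (kmeet b x) kbot) ->
                              C a (kmeet a b)).
  { intros a b Hab. destruct (HB b) as [b' [Hbb' Hb]].
    assert (Hab' : C (kmeet a b') kbot) by (apply Hab; rewrite Hbb'; apply Crefl).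
    rewrite (complement_split L Hbool a b b' Hb) at 1.
    replace (kmeet a b) with (kjoin (kmeet a b) kbot) at 2
      by (apply kle_antisym; auto with lat).
    apply Cjoin; [apply Crefl|exact Hab']. }
  apply d_reduced_quot_iff; [exact HC|]. intros a b Hab.
  apply Ctrans with (kmeet a b); [apply Hmeet, Hab|].
  replace (kmeet a b) with (kmeet b a) by (apply kle_antisym; auto with lat).
  apply Csym, Hmeet. intro x. symmetry. apply Hab.
Qed.

Theorem mainTheorem16 (K : Type) (HK : regular_cardinal K) (L : kframe K) :
  (forall C : L -> L -> Prop, congruence L C -> d_reduced (qmeet L C) (qbot L C))
  <-> boolean L.
Proof.
  pose proof (card_lt_bool K (proj1 HK)) as Hbool.
  split.
  - apply d_reduced_quot_boolean, Hbool.
  - intros HB C. apply boolean_quot_d_reduced; assumption.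
Qed.
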